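(* For every integer $k\ge2$, $$\max_{n\ge1}\frac{\log\tau_k(n)}{n}=\frac{\log k}{2}.$$
   Context: $\tau_k(n)$ is the number of ordered $k$-tuples of positive integers $(d_1,\dots,d_k)$ with $d_1\cdots d_k=n$. *)

From mathcomp Require Import all_boot.
Set Implicit Arguments. Unset Strict Implicit. Unset Printing Implicit Defensive.

(* tau k n = number of ordered k-tuples (d_1,...,d_k) of positive integers with
   d_1 * ... * d_k = n.  For n >= 1 every such d_i divides n, so d_i <= n and
   it suffices to range over 'I_n.+1. *)
Definition tau (k n : nat) : nat :=
  #|[set t : k.-tuple 'I_n.+1 |
       all (fun d : 'I_n.+1 => 0 < (d : nat)) t &&
       (\prod_(d <- t) (d : nat) == n)]|.

(** Dividing [p] out of the first coordinate divisible by the prime [p] maps the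
    factorizations of [p * m] injectively into pairs (coordinate, factorization
    of [m]), so [tau k (p * m) <= k * tau k m].  Induction on [n] then gives
    [tau k n ^ 2 <= k ^ n], because [m + 2 <= p * m] once [m >= 2] (and
    [tau k p <= k] when [m = 1]); this is [log tau_k(n) / n <= log k / 2], with
    equality at [n = 2] since [tau_k(2) = k]. *)

From Stdlib Require Import Reals Lra Lia.
From mathcomp Require Import ssreflect ssrbool.
From mathcomp Require all_boot.

Module DivisorTuples.

Import all_boot.

Definition ordered_factorizations (k n : nat) : {set k.-tuple 'I_n.+1} :=
  [set t : k.-tuple 'I_n.+1 |
     all (fun d : 'I_n.+1 => 0 < (d : nat)) t &&
     (\prod_(d <- t) (d : nat) == n)].

Lemma tauE k n : tau k n = #|ordered_factorizations k n|.
Proof. by []. Qed.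

Lemma tau1_le1 k : tau k 1 <= 1.
Proof.
rewrite tauE; apply/card_le1_eqP => t1 t2; rewrite !inE.
move=> /andP[/allP pos1 _] /andP[/allP pos2 _].
apply: eq_from_tnth => j; apply/val_inj.
move: (pos1 _ (mem_tnth j t1)) (pos2 _ (mem_tnth j t2)).
by case: (tnth t1 j) (tnth t2 j) => [[|[|a]] ?] [[|[|b]] ?].
Qed.

Definition single_tuple {k} n (i : 'I_k) (d : nat) : k.-tuple 'I_n.+1 :=
  [tuple (if j == i then inord d else inord 1) | j < k].

Lemma single_tuple_factorization k n (i : 'I_k) :
  0 < n -> single_tuple n i n \in ordered_factorizations k n.
Proof.
move=> n_gt0; rewrite inE; apply/andP; split.
  by apply/allP => _ /mapP[j _ ->]; case: eqP; rewrite inordK.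
rewrite big_tuple (bigD1 i) //= tnth_mktuple eqxx inordK //.
by rewrite big1 ?muln1 // => j /negbTE j_neq_i; rewrite tnth_mktuple j_neq_i inordK.
Qed.

Lemma tau_gt0 k n : 0 < k -> 0 < n -> 0 < tau k n.
Proof.
case: k => // k _ n_gt0; rewrite tauE card_gt0; apply/set0Pn.
by exists (single_tuple n ord0 n); apply: single_tuple_factorization.
Qed.

Section RemovePrimeFactor.

Variables (k p m : nat).
Hypotheses (p_prime : prime p) (m_gt0 : 0 < m).

Let n := p * m.
Let divisible_by_p := fun d : 'I_n.+1 => p %| d.

Let first_p_coord (t : k.+1.-tuple 'I_n.+1) : 'I_k.+1 :=
  inord (find divisible_by_p t).

Let divide_out (t : k.+1.-tuple 'I_n.+1) (j : 'I_k.+1) : nat :=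
  if j == first_p_coord t then tnth t j %/ p else tnth t j.

Lemma first_p_coordP t : t \in ordered_factorizations k.+1 n ->
  [/\ p %| tnth t (first_p_coord t), \prod_j divide_out t j = m
    & forall j, 0 < tnth t j].
Proof.
rewrite inE => /andP[/allP t_pos /eqP t_prod].
have p_dvd_prod : has divisible_by_p t.
  have : p %| \prod_(d <- t) (d : nat) by rewrite t_prod dvdn_mulr.
  by rewrite Euclid_dvd_prod // big_has.
have find_lt : find divisible_by_p t < k.+1.
  by rewrite has_find size_tuple in p_dvd_prod.
have p_dvd : p %| tnth t (first_p_coord t).
  by rewrite (tnth_nth (tnth t ord0)) inordK //; exact: (nth_find _ p_dvd_prod).
split; [exact: p_dvd | | by move=> j; apply/t_pos/mem_tnth].
apply/eqP; rewrite -(eqn_pmul2l (prime_gt0 p_prime)) -[p * m]/n -t_prod; apply/eqP.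
rewrite big_tuple (bigD1 (first_p_coord t)) // [RHS](bigD1 (first_p_coord t)) //.
rewrite /divide_out eqxx mulnA [p * _]mulnC divnK //; congr (_ * _).
by apply: eq_bigr => j /negbTE ->.
Qed.

Lemma divide_out_bounds t j : t \in ordered_factorizations k.+1 n ->
  0 < divide_out t j <= m.
Proof.
case/first_p_coordP => p_dvd t_prod t_pos.
have out_dvd : divide_out t j %| m.
  by rewrite -t_prod (bigD1 j) //= dvdn_mulr.
rewrite (dvdn_leq m_gt0 out_dvd) andbT /divide_out.
case: eqP => [->|_]; last exact: t_pos.
by rewrite divn_gt0 ?prime_gt0 // (dvdn_leq (t_pos _) p_dvd).
Qed.

Lemma tau_mul_prime_le : tau k.+1 n <= k.+1 * tau k.+1 m.
Proof.
pose f t := (first_p_coord t, [tuple (inord (divide_out t j) : 'I_m.+1) | j < k.+1]).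
have divide_outK t j : t \in ordered_factorizations k.+1 n ->
    (inord (divide_out t j) : 'I_m.+1) = divide_out t j :> nat.
  by move=> /(divide_out_bounds t j) /andP[_ le_m]; rewrite inordK // ltnS.
have f_inj : {in ordered_factorizations k.+1 n &, injective f}.
  move=> t1 t2 t1F t2F eq_f.
  move: (congr1 fst eq_f) (congr1 snd eq_f) => /= same_coord same_out.
  apply: eq_from_tnth => j; apply/val_inj => /=.
  have := congr1 (fun s => val (tnth s j)) same_out.
  rewrite /= !tnth_mktuple !divide_outK //.
  rewrite /divide_out same_coord; case: eqP => [->|_] // eq_div.
  have [p_dvd1 _ _] := first_p_coordP t1 t1F; have [p_dvd2 _ _] := first_p_coordP t2 t2F.
  by rewrite -(divnK p_dvd2) -eq_div -same_coord divnK.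
rewrite !tauE -(card_in_imset f_inj).
apply: leq_trans (_ : #|setX [set: 'I_k.+1] (ordered_factorizations k.+1 m)| <= _);
  last by rewrite cardsX cardsT card_ord.
apply/subset_leq_card/subsetP => _ /imsetP[t tF ->]; rewrite !inE /=.
apply/andP; split.
  apply/allP => _ /mapP[j _ ->].
  by rewrite divide_outK //; case/andP: (divide_out_bounds t j tF).
have [_ t_prod _] := first_p_coordP t tF.
apply/eqP; rewrite big_map big_enum -[RHS]t_prod.
by apply: eq_big => // j _; apply: divide_outK.
Qed.

End RemovePrimeFactor.

Lemma tau_prime_le k p : prime p -> tau k p <= k.
Proof.
case: k => [|k] p_prime.
  rewrite tauE leqn0 cards_eq0; apply/eqP/setP => t.
  by rewrite !inE big_tuple big_ord0 eq_sym (gtn_eqF (prime_gt1 p_prime)) andbF.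
have := tau_mul_prime_le k p 1 p_prime isT; rewrite muln1 => /leq_trans-> //.
by rewrite -[leqRHS]muln1 leq_mul2l tau1_le1 orbT.
Qed.

Lemma tau_prime k p : 0 < k -> prime p -> tau k p = k.
Proof.
case: k => // k _ p_prime; apply/eqP; rewrite eqn_leq tau_prime_le //=.
have single_inj : injective (fun i : 'I_k.+1 => single_tuple p i p).
  move=> i1 i2 /(congr1 (fun t => val (tnth t i1))).
  rewrite /= !tnth_mktuple eqxx; case: eqP => [-> //|_].
  rewrite !inordK ?ltnS ?prime_gt0 // => p_eq1.
  by move: (prime_gt1 p_prime); rewrite p_eq1.
rewrite tauE -[X in X <= _]card_ord -(card_imset _ single_inj).
apply/subset_leq_card/subsetP => _ /imsetP[i _ ->].
exact/single_tuple_factorization/prime_gt0.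
Qed.

Lemma tau_sqr_le_exp k n : 0 < k -> 0 < n -> tau k n ^ 2 <= k ^ n.
Proof.
case: k => // k _; elim/ltn_ind: n => n IH n_gt0.
have [n_le1|n_gt1] := leqP n 1.
  have -> : n = 1 by apply/eqP; rewrite eqn_leq n_le1.
  by rewrite expn1 (leq_trans _ (ltn0Sn k)) // -(exp1n 2) leq_exp2r // tau1_le1.
have p_prime := pdiv_prime n_gt1; set p := pdiv n in p_prime.
have nE : n = p * (n %/ p) by rewrite mulnC divnK // pdiv_dvd.
set m := n %/ p in nE; have m_gt0 : 0 < m by move: n_gt0; rewrite nE muln_gt0 => /andP[].
have [m_le1|m_gt1] := leqP m 1.
  have m1 : m = 1 by apply/eqP; rewrite eqn_leq m_le1.
  apply: leq_trans (_ : k.+1 ^ 2 <= _); last by rewrite leq_pexp2l // nE m1 muln1 prime_gt1.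
  by rewrite leq_exp2r // nE m1 muln1 tau_prime_le.
have m_lt_n : m < n by rewrite nE ltn_Pmull // prime_gt1.
apply: leq_trans (_ : (k.+1 * tau k.+1 m) ^ 2 <= _).
  by rewrite leq_exp2r // nE tau_mul_prime_le.
rewrite expnMn; apply: leq_trans (_ : k.+1 ^ 2 * k.+1 ^ m <= _).
  by rewrite leq_mul2l IH ?orbT.
rewrite -expnD leq_pexp2l // nE; apply: leq_trans (_ : m * 2 <= _).
  by rewrite muln2 -addnn leq_add2r.
by rewrite mulnC leq_mul2r (prime_gt1 p_prime) orbT.
Qed.

End DivisorTuples.

Open Scope R_scope.

Lemma INR_expn m n : INR (ssrnat.expn m n) = INR m ^ n.
Proof.
by elim: n => [|n IH] //=; rewrite ssrnat.expnS -ssrnat.multE mult_INR IH.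
Qed.

Lemma INR_tau_gt0 k n : (0 < k)%nat -> (0 < n)%nat -> 0 < INR (tau k n).
Proof.
move=> /ssrnat.ltP k_gt0 /ssrnat.ltP n_gt0.
exact/lt_0_INR/ssrnat.ltP/DivisorTuples.tau_gt0.
Qed.

Lemma INR_tau_sqr_le k n : (0 < k)%nat -> (0 < n)%nat -> INR (tau k n) ^ 2 <= INR k ^ n.
Proof.
move=> /ssrnat.ltP k_gt0 /ssrnat.ltP n_gt0; rewrite -!INR_expn.
exact/le_INR/ssrnat.leP/DivisorTuples.tau_sqr_le_exp.
Qed.

Lemma ln_div_le_of_sqr_le_pow (t K : R) (n : nat) :
  0 < t -> 0 < K -> (0 < n)%nat -> t ^ 2 <= K ^ n -> ln t / INR n <= ln K / 2.
Proof.
move=> t_gt0 K_gt0 n_gt0 sqr_le.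
have n_pos : 0 < INR n by apply: lt_0_INR.
have ln_le : 2 * ln t <= INR n * ln K.
  rewrite -ln_pow // -(ln_pow t t_gt0 2); case: (Rle_lt_or_eq_dec _ _ sqr_le).
    by move=> lt; left; apply: ln_increasing => //; apply: pow_lt.
  by move=> ->; right.
apply/(Rmult_le_reg_r (2 * INR n)); first lra.
by field_simplify; lra.
Qed.

Theorem lemma3 (k : nat) (hk : (2 <= k)%nat) :
  (exists n : nat, (1 <= n)%nat /\
     ln (INR (tau k n)) / INR n = ln (INR k) / 2) /\
  (forall n : nat, (1 <= n)%nat ->
     ln (INR (tau k n)) / INR n <= ln (INR k) / 2).
Proof.
have k_gt0 : (0 < k)%nat by lia.
split.
  exists 2%nat; split; first by auto.
  by rewrite (DivisorTuples.tau_prime k 2 (introT ssrnat.ltP k_gt0) isT).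
move=> n n_gt0; apply: ln_div_le_of_sqr_le_pow.
- exact: INR_tau_gt0.
- exact: lt_0_INR.
- exact: n_gt0.
- exact: INR_tau_sqr_le.
Qed.
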